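(* Let $1\le r\le n$, let $\mathcal{A}$ be a family of $r$-element subsets of $[n]$, and let $m$ be defined on $\mathcal{A}$ by: $m(A)=n/r$ if $A$ is contained in some matching of $\lfloor n/r\rfloor$ sets from $\mathcal{A}$, and otherwise $m(A)$ is the size of the largest matching of sets from $\mathcal{A}$ containing $A$. Let $\sigma$ be a cyclic permutation of $[n]$ and let $\mathcal{A}^\sigma$ be the collection of sets in $\mathcal{A}$ that are intervals in $\sigma$. Then \[ \sum_{A\in\mathcal{A}^\sigma}\frac{1}{m(A)}\le r. \]
   Context: A matching is a collection of pairwise disjoint sets. A cyclic permutation $\sigma$ of $[n]$ is a cyclic ordering $a_1<a_2<\dots<a_n<a_1$ of the elements of $[n]$. A set is an interval in $\sigma$ if its elements are consecutive in this cyclic order. *)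

From mathcomp Require Import all_boot all_order all_algebra all_fingroup.
Set Implicit Arguments. Unset Strict Implicit. Unset Printing Implicit Defensive.
Import Order.TTheory GRing.Theory Num.Theory.

Definition matching_of (n : nat) (F M : {set {set 'I_n}}) : bool :=
  (M \subset F) && trivIset M.

Definition mval (n r : nat) (F : {set {set 'I_n}}) (A : {set 'I_n}) : rat :=
  if [exists M : {set {set 'I_n}}, [&& matching_of F M, A \in M & #|M| == n %/ r]]
  then (n%:R / r%:R)%R
  else (\max_(M : {set {set 'I_n}} | matching_of F M && (A \in M)) #|M|)%:R%R.

(* A cyclic permutation sigma of [n] is given by a bijection p : 'I_n -> 'I_n
   listing the cyclic order p 0 < p 1 < ... < p (n-1) < p 0.
   S is an interval of sigma iff its elements are consecutive: there is a start
   position i and a length k <= n (k : 'I_n.+1) such that S is the set of elements whose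
   position lies in i, i+1, ..., i+k-1 (mod n). *)
Definition is_interval (n : nat) (p : {perm 'I_n}) (S : {set 'I_n}) : bool :=
  [exists i : 'I_n, exists k : 'I_n.+1,
    S == [set x | (((p^-1)%g x : nat) + n - i) %% n < k]].

From mathcomp Require Import all_boot all_order all_algebra all_fingroup.
From mathcomp Require Import zify.
Import Order.TTheory GRing.Theory Num.Theory.
Set Implicit Arguments. Unset Strict Implicit. Unset Printing Implicit Defensive.

(* Record an r-interval of sigma by the position of its first
   element; two r-intervals are disjoint iff their starts are at cyclic distance
   at least r.  If A lies in a matching of k intervals, then 1/m(A) is at most
   h_n(k) := r/n when k = n %/ r and 1/k otherwise ([mcap]), and k h_n(k) <= 1.
   By induction on n, weights on a set S of starts that are bounded by h_n(k)
   on every start of a matching of k starts from S ([capped]) sum to at most r: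
   - if r divides n, the residue classes mod r are r matchings, each of weight
     at most 1;
   - if S contains every position, each start lies in a rotated matching of
     n %/ r starts, so every weight is at most r/n;
   - otherwise delete a position outside S: matchings on the n-1 remaining
     positions stay matchings on the n-cycle, and h_n <= h_(n-1) because
     n %/ r = (n-1) %/ r when r does not divide n. *)

Lemma sumr_seq_le_const (R : numDomainType) (I : eqType) (s : seq I)
    (w : I -> R) (c : R) :
  {in s, forall a, w a <= c}%R -> (\sum_(a <- s) w a <= c *+ size s)%R.
Proof.
move=> le_wc; rewrite -[size s]count_predT -iter_addr_0 -big_const_seq.
by rewrite !big_seq; apply: ler_sum.
Qed.

Lemma modn_lt_double x N : x < N + N -> x %% N = if x < N then x else x - N.
Proof.
move=> x_lt; case: ifP => x_N; first by rewrite modn_small.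
have -> : x = (x - N) + N by lia.
by rewrite modnDr modn_small; lia.
Qed.

Section CyclicStarts.

Variable r : nat.
Hypothesis r_gt0 : 0 < r.

(* For [a, b < n]: the arcs [a, a + r) and [b, b + r) of Z/nZ are disjoint. *)
Definition apart (n a b : nat) : bool :=
  ((a + r <= b) && (b + r <= a + n)) || ((b + r <= a) && (a + r <= b + n)).

Lemma apartC n a b : apart n a b = apart n b a.
Proof. by rewrite /apart orbC. Qed.

Lemma apart_neq n a b : apart n a b -> a != b.
Proof. by move=> /orP[/andP[? ?]|/andP[? ?]]; apply/eqP; lia. Qed.

Lemma apart_modn n a b : r %| n -> a < n -> b < n ->
  a %% r = b %% r -> a != b -> apart n a b.
Proof.
move=> /dvdnP[c ->] a_lt b_lt eq_mod neq_ab.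
rewrite (divn_eq a r) (divn_eq b r) eq_mod in a_lt b_lt neq_ab *.
move: (a %/ r) (b %/ r) (b %% r) a_lt b_lt neq_ab => qa qb j a_lt b_lt neq_ab.
have qa_neq_qb : qa != qb by apply: contra neq_ab => /eqP ->.
have qa_lt : qa < c by rewrite -(ltn_pmul2r r_gt0); lia.
have qb_lt : qb < c by rewrite -(ltn_pmul2r r_gt0); lia.
have ltrS x y : x < y -> x * r + r <= y * r.
  by move=> lt_xy; rewrite -mulSnr leq_mul2r lt_xy orbT.
rewrite /apart; case: (ltngtP qa qb) qa_neq_qb => // lt_q _.
- have := ltrS _ _ lt_q; have := ltrS _ _ qb_lt; lia.
- have := ltrS _ _ lt_q; have := ltrS _ _ qa_lt; lia.
Qed.

Lemma apart_shift n a i j : a < n -> i < j -> j < n %/ r ->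
  apart n ((a + i * r) %% n) ((a + j * r) %% n).
Proof.
move=> a_lt i_lt_j j_lt.
have ir_le : i.+1 * r <= j * r by rewrite leq_mul2r i_lt_j orbT.
have jr_le : j.+1 * r <= n %/ r * r by rewrite leq_mul2r j_lt orbT.
have := leq_divM n r; rewrite !mulSn in ir_le jr_le => nr_le.
rewrite (@modn_lt_double (a + i * r)); last lia.
rewrite (@modn_lt_double (a + j * r)); last lia.
by rewrite /apart; case: ifP => ?; case: ifP => ?; lia.
Qed.

(* [skip p] maps the positions of an n-cycle to the positions other than [p] of
   an (n+1)-cycle, preserving the cyclic order; [unskip p] is its inverse. *)
Definition skip (p y : nat) : nat := if y < p then y else y.+1.
Definition unskip (p x : nat) : nat := if x < p then x else x.-1.

Lemma skip_inj p : injective (skip p).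
Proof. by move=> x y; rewrite /skip; case: ifP => ?; case: ifP => ?; lia. Qed.

Lemma unskipK p x : x != p -> skip p (unskip p x) = x.
Proof.
by rewrite /unskip => /eqP ?; case: (ltnP x p) => ?; rewrite /skip; case: ifP => ?; lia.
Qed.

Lemma unskip_lt p n x : p < n.+1 -> x < n.+1 -> x != p -> unskip p x < n.
Proof. by rewrite /unskip => ? ? /eqP ?; case: ifP => ?; lia. Qed.

Lemma apart_skip n p y z : y < n -> z < n ->
  apart n y z -> apart n.+1 (skip p y) (skip p z).
Proof. by rewrite /apart /skip => ? ?; case: ifP => ?; case: ifP => ?; lia. Qed.

Definition mcap (n k : nat) : rat :=
  if k == n %/ r then (r%:R / n%:R)%R else (k%:R)^-1%R.

Lemma mcap_mul_le1 n k : 0 < n -> (k%:R * mcap n k <= 1)%R.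
Proof.
move=> n_gt0; rewrite /mcap; case: eqP => [->|_].
  by rewrite mulrA -natrM ler_pdivrMr ?ltr0n // mul1r ler_nat leq_divM.
by case: k => [|k]; rewrite ?mul0r // divff // pnatr_eq0.
Qed.

Lemma mcap_succ_le n k : r <= n -> ~~ (r %| n.+1) -> (mcap n.+1 k <= mcap n k)%R.
Proof.
move=> r_le r_ndvd; rewrite /mcap divnS // (negbTE r_ndvd) add0n.
case: eqP => // _.
by rewrite ler_wpM2l // lef_pV2 ?posrE ?ltr0n ?ler_nat //; lia.
Qed.

Definition sep_matching (n : nat) (S M : seq nat) : Prop :=
  [/\ uniq M, {subset M <= S} & {in M &, forall x y, x != y -> apart n x y}].

Definition capped (n : nat) (S : seq nat) (w : nat -> rat) : Prop :=
  forall a M, a \in S -> a \in M -> sep_matching n S M -> (w a <= mcap n (size M))%R.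

Lemma rotation_sep_matching n S a : a < n -> {subset iota 0 n <= S} ->
  let M := [seq (a + i * r) %% n | i <- iota 0 (n %/ r)] in
  sep_matching n S M /\ size M = n %/ r.
Proof.
move=> a_lt sub_S M; split; last by rewrite size_map size_iota.
have apartM : {in iota 0 (n %/ r) &, forall i j, i != j ->
    apart n ((a + i * r) %% n) ((a + j * r) %% n)}.
  move=> i j; rewrite !mem_iota !add0n => i_lt j_lt.
  by case: (ltngtP i j) => // lt_ij _; [|rewrite apartC]; exact: apart_shift.
split.
- rewrite map_inj_in_uniq ?iota_uniq // => i j i_in j_in eq_ij.
  apply/eqP; apply: contraT => neq_ij.
  by move: (apart_neq (apartM i j i_in j_in neq_ij)); rewrite eq_ij eqxx.
- by move=> x /mapP[i _ ->]; apply: sub_S; rewrite mem_iota add0n ltn_pmod //; lia.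
- move=> x y /mapP[i i_in ->] /mapP[j j_in ->] neq; apply: apartM => //.
  by apply: contra neq => /eqP ->.
Qed.

Section CappedSum.

Variables (n : nat) (S : seq nat) (w : nat -> rat).
Hypotheses (S_uniq : uniq S) (S_lt : all (fun a => a < n) S).

Lemma capped_sum_le_dvdn : 0 < n -> r %| n -> capped n S w ->
  (\sum_(a <- S) w a <= r%:R)%R.
Proof.
move=> n_gt0 r_dvd w_capped.
have -> : (\sum_(a <- S) w a = \sum_(j < r) \sum_(a <- S | (a %% r)%N == j) w a)%R.
  rewrite (exchange_big_dep xpredT) //=; apply: eq_bigr => a _.
  by rewrite (big_pred1 (Ordinal (ltn_pmod a r_gt0))).
rewrite -[in X in (_ <= X)%R](card_ord r) -sumr_const; apply: ler_sum => j _.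
rewrite -big_filter; set T := [seq a <- S | a %% r == j].
have T_matching : sep_matching n S T.
  split; first exact: filter_uniq.
  - by move=> x; rewrite mem_filter => /andP[].
  - move=> x y; rewrite !mem_filter => /andP[/eqP x_j x_S] /andP[/eqP y_j y_S].
    by apply: apart_modn; rewrite ?x_j ?y_j ?(allP S_lt x x_S) ?(allP S_lt y y_S).
apply: le_trans (mcap_mul_le1 (size T) n_gt0); rewrite mulr_natl.
apply: sumr_seq_le_const => a a_T; apply: w_capped => //.
by move: a_T; rewrite mem_filter => /andP[].
Qed.

Lemma capped_sum_le_full : r <= n -> {subset iota 0 n <= S} -> capped n S w ->
  (\sum_(a <- S) w a <= r%:R)%R.
Proof.
move=> r_le full w_capped.
have n_gt0 : 0 < n by apply: leq_trans r_le.
have w_le a : a \in S -> (w a <= r%:R / n%:R)%R.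
  move=> a_S; have a_lt : a < n by move/allP: S_lt => /(_ a a_S).
  have [M_matching M_size] := rotation_sep_matching a_lt full.
  rewrite (_ : (r%:R / n%:R)%R = mcap n (n %/ r)); last by rewrite /mcap eqxx.
  rewrite -M_size; apply: w_capped M_matching => //.
  by apply/mapP; exists 0; rewrite ?mul0n ?addn0 ?modn_small // mem_iota add0n divn_gt0.
have size_S : size S <= n.
  rewrite -(size_iota 0 n); apply: uniq_leq_size => // x x_S.
  by rewrite mem_iota add0n; move/allP: S_lt => /(_ x x_S).
apply: le_trans (sumr_seq_le_const w_le) _.
rewrite -[X in (X <= _)%R]mulr_natr mulrAC ler_pdivrMr ?ltr0n //.
by rewrite -!natrM ler_nat leq_mul2l size_S orbT.
Qed.

End CappedSum.

Lemma capped_unskip n S w p : r <= n -> ~~ (r %| n.+1) -> p < n.+1 -> p \notin S ->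
  all (fun a => a < n.+1) S -> capped n.+1 S w ->
  capped n (map (unskip p) S) (fun a => w (skip p a)).
Proof.
move=> r_le r_ndvd p_lt p_S S_lt w_capped _ M /mapP[a a_S ->] a_M.
case=> M_uniq M_sub M_apart.
have a_p : a != p by apply: contraNneq p_S => <-.
have M_lt y : y \in M -> y < n.
  move=> /M_sub /mapP[x x_S ->]; apply: unskip_lt; rewrite ?(allP S_lt x x_S) //.
  by apply: contraNneq p_S => <-.
rewrite -(size_map (skip p)); apply: le_trans (mcap_succ_le _ r_le r_ndvd).
apply: w_capped; rewrite ?map_f ?unskipK //.
split; first by rewrite map_inj_uniq //; exact: skip_inj.
- move=> x /mapP[y /M_sub /mapP[z z_S ->] ->]; rewrite unskipK //.
  by apply: contraNneq p_S => <-.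
- move=> x y /mapP[x' x'_M ->] /mapP[y' y'_M ->] neq.
  apply: apart_skip; rewrite ?M_lt //; apply: M_apart => //.
  by apply: contra neq => /eqP ->.
Qed.

Lemma capped_sum_le n S w : r <= n -> uniq S -> all (fun a => a < n) S ->
  capped n S w -> (\sum_(a <- S) w a <= r%:R)%R.
Proof.
elim: n S w => [|n IHn] S w r_le S_uniq S_lt w_capped; first lia.
have [r_dvd|r_ndvd] := boolP (r %| n.+1); first exact: (capped_sum_le_dvdn S_uniq S_lt).
have [full|] := boolP (all (fun x => x \in S) (iota 0 n.+1)).
  by apply: (capped_sum_le_full S_uniq S_lt) => // x; move/allP: full; apply.
case/allPn => p; rewrite mem_iota add0n => p_lt p_S.
have r_le' : r <= n.
  by move: r_le; rewrite leq_eqVlt => /orP[/eqP r_eq|//]; rewrite r_eq dvdnn in r_ndvd.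
have S_p a : a \in S -> a != p by move=> a_S; apply: contraNneq p_S => <-.
have -> : (\sum_(a <- S) w a = \sum_(b <- map (unskip p) S) w (skip p b))%R.
  by rewrite big_map; apply: eq_big_seq => a a_S; rewrite unskipK ?S_p.
apply: IHn => //; last exact: capped_unskip.
- rewrite map_inj_in_uniq // => x y x_S y_S eq_xy.
  by rewrite -(unskipK (S_p x x_S)) eq_xy unskipK ?S_p.
- apply/allP => y /mapP[x x_S ->]; apply: unskip_lt => //; last exact: S_p.
  by move/allP: S_lt; apply.
Qed.

End CyclicStarts.

Section Arcs.

Variables (n : nat) (p : {perm 'I_n}).

Definition arc (k i : nat) : {set 'I_n} :=
  [set x | (((p^-1)%g x : nat) + n - i) %% n < k].

Lemma card_ord_ltn k : k <= n -> #|[set z : 'I_n | z < k]| = k.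
Proof.
move=> k_le; have -> : [set z : 'I_n | z < k] = widen_ord k_le @: [set: 'I_k].
  apply/setP => z; rewrite inE.
  apply/idP/imsetP => [z_lt|[y _ ->]]; last by rewrite /= ltn_ord.
  by exists (Ordinal z_lt); rewrite ?inE //; apply: val_inj.
by rewrite card_imset ?cardsT ?card_ord // => a b /(congr1 val) /= /val_inj.
Qed.

Lemma card_arc k i : i < n -> k <= n -> #|arc k i| = k.
Proof.
move=> i_lt k_le; have n_gt0 : 0 < n by apply: leq_ltn_trans i_lt.
pose f (x : 'I_n) : 'I_n := Ordinal (ltn_pmod (((p^-1)%g x : nat) + n - i) n_gt0).
have -> : arc k i = f @^-1: [set z : 'I_n | z < k] by apply/setP => x; rewrite !inE.
rewrite card_preimset ?card_ord_ltn // => x y /(congr1 val) /=.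
have := ltn_ord ((p^-1)%g x); have := ltn_ord ((p^-1)%g y) => y_lt x_lt.
rewrite !modn_lt_double; try lia.
move=> eq_pos; apply: (perm_inj (s := (p^-1)%g)); apply: val_inj.
by move: eq_pos; case: ifP; case: ifP => /=; lia.
Qed.

Lemma disjoint_arcs r i j : i < n -> j < n -> apart r n i j ->
  [disjoint arc r i & arc r j].
Proof.
move=> i_lt j_lt ij_apart; apply/pred0P => x /=; rewrite !inE.
have := ltn_ord ((p^-1)%g x) => x_lt.
rewrite !modn_lt_double; try lia.
by move: ij_apart; rewrite /apart; case: ifP; case: ifP; lia.
Qed.

Lemma mem_arc_first k i (i_lt : i < n) : 0 < k -> p (Ordinal i_lt) \in arc k i.
Proof. by move=> k_gt0; rewrite inE permK /= addKn modnn. Qed.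

Definition arc_start (A : {set 'I_n}) : nat :=
  if [pick i : 'I_n | [exists k : 'I_n.+1, A == arc k i]] is Some i then val i else 0.

Lemma arc_startP r A : is_interval p A -> #|A| = r ->
  arc_start A < n /\ A = arc r (arc_start A).
Proof.
move=> /existsP[i /existsP[k /eqP A_arc]] A_card; rewrite /arc_start.
case: pickP => [j /existsP[k' /eqP A_arc']|/(_ i)]; last first.
  by rewrite A_arc; move/existsP; case; exists k.
split; first exact: ltn_ord.
by rewrite A_arc' -A_card A_arc' card_arc // -ltnS.
Qed.

End Arcs.

Lemma matching_card_mul_le n r (F M : {set {set 'I_n}}) :
  (forall B, B \in F -> #|B| = r) -> matching_of F M -> #|M| * r <= n.
Proof.
move=> F_card /andP[M_sub /eqP M_triv].
have := max_card (mem (cover M)); rewrite card_ord -M_triv.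
by rewrite (eq_bigr (fun=> r)) ?sum_nat_const // => B /(subsetP M_sub)/F_card.
Qed.

Lemma inv_mval_le_mcap n r (F M : {set {set 'I_n}}) A :
  0 < r -> (forall B, B \in F -> #|B| = r) -> matching_of F M -> A \in M ->
  ((mval r F A)^-1 <= mcap r n #|M|)%R.
Proof.
move=> r_gt0 F_card M_matching A_M.
have M_gt0 : 0 < #|M| by apply/card_gt0P; exists A.
have Mr_le := matching_card_mul_le F_card M_matching.
have n_gt0 : 0 < n by apply: leq_trans Mr_le; rewrite muln_gt0 M_gt0.
rewrite /mval /mcap; case: ifP => [_|no_max_matching].
  rewrite invf_div; case: eqP => // _.
  by rewrite ler_pdivrMr ?ltr0n // ler_pdivlMl ?ltr0n // -natrM ler_nat.
have M_le_max : #|M| <= \max_(M0 | matching_of F M0 && (A \in M0)) #|M0|.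
  by apply: leq_bigmax_cond; rewrite M_matching A_M.
have /negbTE -> : #|M| != n %/ r.
  apply: contraFN no_max_matching => /eqP M_card; apply/existsP; exists M.
  by rewrite M_matching A_M M_card eqxx.
by rewrite lef_pV2 ?posrE ?ltr0n ?ler_nat //; apply: leq_trans M_le_max.
Qed.

Lemma arcs_matching n (p : {perm 'I_n}) r (F : {set {set 'I_n}}) (M : seq nat) :
  0 < r -> uniq M -> {in M, forall j, j < n /\ arc p r j \in F} ->
  {in M &, forall i j, i != j -> apart r n i j} ->
  let Ms := [set B in map (arc p r) M] in matching_of F Ms /\ #|Ms| = size M.
Proof.
move=> r_gt0 M_uniq M_arc M_apart Ms.
have M_disj i j : i \in M -> j \in M -> i != j -> [disjoint arc p r i & arc p r j].
  move=> i_M j_M neq; apply: disjoint_arcs (M_apart i j i_M j_M neq).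
    exact: (M_arc i i_M).1.
  exact: (M_arc j j_M).1.
have arc_inj : {in M &, injective (arc p r)}.
  move=> i j i_M j_M eq_arc; apply/eqP; apply: contraT => neq.
  have i_lt := (M_arc i i_M).1.
  move/pred0P: (M_disj i j i_M j_M neq) => /(_ (p (Ordinal i_lt))) /=.
  by rewrite -eq_arc mem_arc_first.
split.
- apply/andP; split.
    by apply/subsetP => B; rewrite inE => /mapP[j j_M ->]; exact: (M_arc j j_M).2.
  apply/trivIsetP => B C; rewrite !inE => /mapP[i i_M ->] /mapP[j j_M ->] neq.
  by apply: M_disj => //; apply: contra neq => /eqP ->.
- rewrite cardsE -(size_map (arc p r)); apply/card_uniqP.
  by rewrite map_inj_in_uniq.
Qed.

Lemma capped_inv_mval n (p : {perm 'I_n}) r (F : {set {set 'I_n}}) (S : seq nat) :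
  0 < r -> (forall B, B \in F -> #|B| = r) ->
  {in S, forall j, j < n /\ arc p r j \in F} ->
  capped r n S (fun j => (mval r F (arc p r j))^-1)%R.
Proof.
move=> r_gt0 F_card S_arc a M a_S a_M [M_uniq M_sub M_apart].
have [Ms_matching <-] := arcs_matching r_gt0 M_uniq (sub_in1 M_sub S_arc) M_apart.
by apply: inv_mval_le_mcap => //; rewrite inE map_f.
Qed.

Theorem lemma6 (n r : nat) (F : {set {set 'I_n}}) (p : {perm 'I_n}) :
  1 <= r -> r <= n ->
  (forall A, A \in F -> #|A| = r) ->
  (\sum_(A in F | is_interval p A) (mval r F A)^-1 <= r%:R)%R.
Proof.
move=> r_gt0 r_le F_card.
rewrite -big_enum_cond /= -big_filter.
set L := [seq A <- enum F | is_interval p A].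
have L_arc A : A \in L -> [/\ A \in F, arc_start p A < n & A = arc p r (arc_start p A)].
  rewrite mem_filter mem_enum => /andP[A_int A_F].
  by have [] := arc_startP A_int (F_card A A_F).
have -> : (\sum_(A <- L) (mval r F A)^-1 =
           \sum_(j <- map (arc_start p) L) (mval r F (arc p r j))^-1)%R.
  by rewrite big_map; apply: eq_big_seq => A /L_arc[_ _ <-].
apply: (capped_sum_le r_gt0 r_le).
- rewrite map_inj_in_uniq; first exact/filter_uniq/enum_uniq.
  move=> A B /L_arc[_ _ A_arc] /L_arc[_ _ B_arc] eq_start.
  by rewrite A_arc B_arc eq_start.
- by apply/allP => j /mapP[A /L_arc[_ A_start _] ->].
- apply: capped_inv_mval => // j /mapP[A /L_arc[A_F A_start A_arc] ->].
  by rewrite -A_arc.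
Qed.
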